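(* Let $\sigma$ be the continuous schedule constructed from an optimal solution $\{y^F_j\}$ of $\mathsf{LP}_\mathsf{primal}$ as described in the context, and for $\lambda\in(0,1]$ let $\sigma^\lambda$ be its stretch by factor $1/\lambda$. If $\lambda$ is drawn at random from $[0,1]$ with probability density $f(v)=2v$, then $$\mathbb{E}\Big[\sum_{j\in J} w_j\, C_{\sigma^\lambda}(j)\Big]\ \le\ 2\sum_{j\in J} w_j\int_0^1 \tilde C_j(v)\,dv .$$
   Context: Co-flow scheduling: $m$ input ports, $m$ output ports, jobs $j\in J$ with weights $w_j\ge0$, integer release times $r_j\ge0$, and nonnegative integer demands $d^j_{io}$ (packets to send from input port $i$ to output port $o$). In each integer time slot $t$ (the interval $[t-1,t)$) each input port sends and each output port receives at most one packet; packets of $j$ may only be sent in slots $t>r_j$. Let $T$ be a positive integer time horizon. A configuration for job $j$ is a set $F$ of triples $(i,o,t)$ with $i,o\in[m]$, $t\in\{r_j+1,\dots,T\}$, such that for each $(i,o)$ exactly $d^j_{io}$ triples of $F$ have ports $(i,o)$, and for each $(i,t)$ at most one triple of $F$ has input port $i$ and time $t$, and for each $(o,t)$ at most one triple has output port $o$ and time $t$. Let $\mathcal F(j)$ be the set of configurations of $j$ and $C^F_j=\max\{t:(i,o,t)\in F\}$. $\mathsf{LP}_\mathsf{primal}$ is: minimize $\sum_j w_j\sum_{F\in\mathcal F(j)}C^F_j y^F_j$ subject to $\sum_{F\in\mathcal F(j)}y^F_j\ge1$ for all $j$; $\sum_{j,o}\sum_{F\in\mathcal F(j):(i,o,t)\in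 F}y^F_j\le1$ for all $i\in[m],t\in[T]$; $\sum_{j,i}\sum_{F\in\mathcal F(j):(i,o,t)\in F}y^F_j\le1$ for all $o\in[m],t\in[T]$; $y\ge0$. Given an optimal solution $y$, set $x^{jt}_{io}=\sum_{F\in\mathcal F(j):(i,o,t)\in F}y^F_j$. The continuous schedule $\sigma$ transfers data of job $j$ from $i$ to $o$ at rate $\sigma_{io,j}(\tau)=x^{jt}_{io}$ for all $\tau\in[t-1,t)$ (realized, via a Birkhoff–von Neumann decomposition of the fractional matching of slot $t$, by integral matchings spread uniformly over $[t-1,t)$). For $v\in[0,1]$, $\tilde C_j(v)$ is the earliest time $\tau$ such that $\int_0^\tau\sigma_{io,j}(s)\,ds\ge v\,d^j_{io}$ for all $i,o$. The stretched schedule $\sigma^\lambda$ schedules in $[\tau_1/\lambda,\tau_2/\lambda)$ whatever matching $\sigma$ schedules in $[\tau_1,\tau_2)$; thus the amount of job $j$'s $(i,o)$ data transferred by time $\tau$ in $\sigma^\lambda$ is $\frac1\lambda\int_0^{\lambda\tau}\sigma_{io,j}(s)\,ds$. $C_{\sigma^\lambda}(j)$ is the earliest time at which, in $\sigma^\lambda$, at least $d^j_{io}$ units of job $j$'s data have been transferred from $i$ to $o$ for every pair $(i,o)$. *)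

From HB Require Import structures.
From mathcomp Require Import all_boot all_order all_algebra.
From mathcomp Require Import all_classical all_reals all_analysis.
Set Implicit Arguments. Unset Strict Implicit. Unset Printing Implicit Defensive.
Import Order.TTheory GRing.Theory Num.Theory.
Local Open Scope classical_set_scope.
Local Open Scope ring_scope.

(* A triple (i, o, t) : 'I_m * 'I_m * 'I_T denotes input port i, output port o
   and time slot t+1 (so slot t+1 is the interval [t, t+1)). *)
Definition triple (m T : nat) := ('I_m * 'I_m * 'I_T)%type.

Section Coflow.
Variables (R : realType) (m T : nat) (J : finType).
Variables (w : J -> R) (r : J -> nat) (d : J -> 'I_m -> 'I_m -> nat).

Definition config (j : J) (F : {set triple m T}) : bool :=
  [&& [forall x in F, r j <= (x.2 : nat)],
      [forall i : 'I_m, forall o : 'I_m,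
         #|[set x in F | (x.1.1 == i) && (x.1.2 == o)]| == d j i o],
      [forall i : 'I_m, forall t : 'I_T,
         #|[set x in F | (x.1.1 == i) && (x.2 == t)]| <= 1] &
      [forall o : 'I_m, forall t : 'I_T,
         #|[set x in F | (x.1.2 == o) && (x.2 == t)]| <= 1]]%N.

(* C^F_j : the last slot used by F (slot of ordinal t is t+1) *)
Definition confC (F : {set triple m T}) : nat := (\max_(x in F) (x.2 : nat).+1)%N.

Definition lp_obj (y : J -> {set triple m T} -> R) : R :=
  \sum_(j : J) w j * \sum_(F | config j F) (confC F)%:R * y j F.

Definition lp_feasible (y : J -> {set triple m T} -> R) : Prop :=
  [/\ (forall j F, config j F -> 0 <= y j F),
      (forall j, 1 <= \sum_(F | config j F) y j F),
      (forall (i : 'I_m) (t : 'I_T),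
         \sum_(j : J) \sum_(o : 'I_m)
            \sum_(F | config j F && ((i, o, t) \in F)) y j F <= 1) &
      (forall (o : 'I_m) (t : 'I_T),
         \sum_(j : J) \sum_(i : 'I_m)
            \sum_(F | config j F && ((i, o, t) \in F)) y j F <= 1)].

Definition lp_optimal (y : J -> {set triple m T} -> R) : Prop :=
  lp_feasible y /\ forall y', lp_feasible y' -> lp_obj y <= lp_obj y'.

Definition xval (y : J -> {set triple m T} -> R) (j : J) (i o : 'I_m) (t : 'I_T) : R :=
  \sum_(F | config j F && ((i, o, t) \in F)) y j F.

(* rate sigma_{io,j}(tau): x^{jt}_{io} on [t-1, t) for slots t = 1..T, 0 elsewhere *)
Definition sigma (y : J -> {set triple m T} -> R) (j : J) (i o : 'I_m) (tau : R) : R :=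
  \sum_(t : 'I_T) (if ((t : nat)%:R <= tau) && (tau < (t : nat).+1%:R)
                   then xval y j i o t else 0).

Definition transferred (y : J -> {set triple m T} -> R) (j : J) (i o : 'I_m) (tau : R) : R :=
  Rintegral lebesgue_measure `[0, tau] (sigma y j i o).

Definition Ctilde (y : J -> {set triple m T} -> R) (j : J) (v : R) : R :=
  inf [set tau : R | 0 <= tau /\
        forall i o : 'I_m, v * (d j i o)%:R <= transferred y j i o tau].

(* C_{sigma^lambda}(j): completion time of j in the stretched schedule, where the
   amount of (i,o) data of j transferred by time tau is
   (1/lambda) int_0^{lambda tau} sigma_{io,j}. *)
Definition Cstretch (y : J -> {set triple m T} -> R) (lam : R) (j : J) : R :=
  inf [set tau : R | 0 <= tau /\
        forall i o : 'I_m, (d j i o)%:R <= lam^-1 * transferred y j i o (lam * tau)].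

End Coflow.

From HB Require Import structures.
From mathcomp Require Import all_boot all_order all_algebra.
From mathcomp Require Import all_classical all_reals all_analysis.
From mathcomp Require Import measurable_realfun.
Import Order.TTheory GRing.Theory Num.Theory.

Set Implicit Arguments.
Unset Strict Implicit.
Unset Printing Implicit Defensive.

Local Open Scope classical_set_scope.
Local Open Scope ring_scope.

(* Stretching by 1/lam turns the requirement "all of d sent by time tau in
   sigma^lam" into "a lam-fraction of d sent by time lam * tau in sigma", so
   C_{sigma^lam}(j) = Ctilde_j(lam) / lam.  Against the density 2 lam the
   factor 1/lam cancels and the expectation is exactly 2 int_0^1 Ctilde_j. *)

Section inf_facts.
Variable R : realType.
Implicit Types (A B : set R).

Lemma inf_ge0 A : (forall x, A x -> 0 <= x) -> 0 <= inf A.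
Proof.
move=> A_ge0; have [->|/set0P[a Aa]] := eqVneq A set0; first by rewrite inf0.
by apply: lb_le_inf; [exists a | move=> x /A_ge0].
Qed.

Lemma le_inf_subset A B : B `<=` A -> B !=set0 -> has_lbound A -> inf A <= inf B.
Proof.
by move=> BA B0 lbA; apply: lb_le_inf => // x /BA; apply: ge_inf.
Qed.

Lemma inf_scale A (c : R) : 0 < c -> has_lbound A ->
  inf [set t | A (c * t)] = c^-1 * inf A.
Proof.
move=> c_gt0 [b lbA]; have c_neq0 : c != 0 by rewrite gt_eqF.
have [->|/set0P[a Aa]] := eqVneq A set0.
  by rewrite (_ : [set t | _] = set0) ?inf0 ?mulr0 //; apply/seteqP; split.
have cK t : c * (c^-1 * t) = t by rewrite mulrA divff // mul1r.
have lbB : has_lbound [set t | A (c * t)].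
  by exists (c^-1 * b) => t /lbA; rewrite ler_pdivrMl.
apply: (mulfI c_neq0); rewrite cK; apply/le_anti/andP; split.
- apply: lb_le_inf; first by exists a.
  by move=> x Ax; rewrite -ler_pdivlMl //; apply: ge_inf => //=; rewrite cK.
- rewrite -ler_pdivrMl //; apply: lb_le_inf; first by exists (c^-1 * a) => /=; rewrite cK.
  by move=> t /= At; rewrite ler_pdivrMl //; apply: ge_inf => //; exists b.
Qed.

End inf_facts.

Section antitone_inf_family.
Variables (R : realType) (S : R -> set R).
Hypothesis S_ge0 : forall v x, S v x -> 0 <= x.
Hypothesis S_anti : forall s u, s <= u -> S u `<=` S s.

(* Since [inf set0 = 0], [v |-> inf (S v)] need not be monotone; only its
   superlevel sets at positive levels are intervals. *)
Lemma is_interval_inf_ge (q : R) : 0 < q -> is_interval [set v | q <= inf (S v)].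
Proof.
move=> q_gt0 s t /= q_le_s q_le_t u /andP[su ut].
have St : S t !=set0.
  apply/set0P/negP => /eqP St0; move: q_le_t; rewrite St0 inf0.
  by rewrite leNgt q_gt0.
have Su : S u !=set0 by case: St => x /(S_anti ut) ?; exists x.
apply: le_trans q_le_s _; apply: le_inf_subset (S_anti su) Su _.
by exists 0 => x /S_ge0.
Qed.

Lemma measurable_inf_family (D : set R) : measurable D ->
  measurable_fun D (fun v => inf (S v)).
Proof.
move=> mD; apply: (measurability (@RGenCInfty.G R)) => [|/= _ [_] [q] -> <-].
  exact: RGenCInfty.measurableE.
have [q_le0|q_gt0] := leP q 0.
  rewrite (_ : _ @^-1` _ = setT) ?setIT //; apply/seteqP; split => v //= _.
  by rewrite in_itv /= andbT (le_trans q_le0) // inf_ge0 // => x /S_ge0.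
apply: measurableI => //; apply: is_interval_measurable.
move=> s t; rewrite /= !in_itv /= !andbT => qs qt u /(is_interval_inf_ge q_gt0 qs qt).
by rewrite in_itv /= andbT.
Qed.

End antitone_inf_family.

Lemma ge0_integral_weighted_sum d (X : measurableType d) (R : realType)
    (mu : {measure set X -> \bar R}) (D : set X) (I : finType)
    (c : R) (w : I -> R) (f : I -> X -> R) :
  measurable D -> 0 <= c -> (forall i, 0 <= w i) ->
  (forall i, measurable_fun D (f i)) -> (forall i x, D x -> 0 <= f i x) ->
  (\int[mu]_(x in D) (c * \sum_i w i * f i x)%:E
   = c%:E * \sum_i (w i)%:E * \int[mu]_(x in D) (f i x)%:E)%E.
Proof.
move=> mD c_ge0 w_ge0 mf f_ge0.
have mwf i : measurable_fun D (fun x => ((w i)%:E * (f i x)%:E)%E).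
  by apply: measurable_funeM; apply/measurable_EFinP.
have wf_ge0 i x : D x -> (0 <= (w i)%:E * (f i x)%:E)%E.
  by move=> Dx; rewrite mule_ge0 ?lee_fin ?f_ge0.
under eq_integral => x _ do rewrite EFinM -sumEFin (eq_bigr _ (fun i _ => EFinM _ _)).
rewrite ge0_integralZl_EFin //; last first.
- exact: emeasurable_sum.
- by move=> x Dx; rewrite sume_ge0 // => i _; apply: wf_ge0.
rewrite ge0_integral_sum //; congr (_ * _)%E; apply: eq_bigr => i _.
by rewrite ge0_integralZl_EFin // => [x Dx|]; [rewrite lee_fin f_ge0 | apply/measurable_EFinP].
Qed.

Section stretched_schedule.
Variables (R : realType) (m T : nat) (J : finType).
Variables (r : J -> nat) (d : J -> 'I_m -> 'I_m -> nat).
Variable y : J -> {set triple m T} -> R.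

Definition Ctilde_times (j : J) (v : R) := [set tau : R | 0 <= tau /\
  forall i o : 'I_m, v * (d j i o)%:R <= transferred r d y j i o tau].

Lemma Ctilde_ge0 j v : 0 <= Ctilde r d y j v.
Proof. by apply: inf_ge0 => x []. Qed.

Lemma Cstretch_Ctilde lam j : 0 < lam ->
  Cstretch r d y lam j = lam^-1 * Ctilde r d y j lam.
Proof.
move=> lam_gt0; rewrite /Ctilde -inf_scale //; last by exists 0 => x [].
congr inf; apply/seteqP; split => tau /= [tau_ge0 sent].
- by split; [rewrite pmulr_rge0 | move=> i o; rewrite -ler_pdivlMl].
- by split; [rewrite -(pmulr_rge0 _ lam_gt0) | move=> i o; rewrite ler_pdivlMl].
Qed.

Lemma measurable_Ctilde j (D : set R) : measurable D ->
  measurable_fun D (Ctilde r d y j).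
Proof.
have times_ge0 v tau : Ctilde_times j v tau -> 0 <= tau by case.
have times_anti s u : s <= u -> Ctilde_times j u `<=` Ctilde_times j s.
  move=> su tau [tau_ge0 sent]; split => // i o.
  by apply: le_trans (sent i o); apply: ler_wpM2r.
exact: measurable_inf_family times_ge0 times_anti D.
Qed.

Hypothesis y_ge0 : forall j F, config r d j F -> 0 <= y j F.

Lemma transferred_ge0 j i o tau : 0 <= transferred r d y j i o tau.
Proof.
apply: fine_ge0; apply: integral_ge0 => x _; rewrite lee_fin.
apply: sumr_ge0 => t _; case: ifP => // _.
by apply: sumr_ge0 => F /andP[cF _]; apply: y_ge0.
Qed.

Lemma Ctilde0 j : Ctilde r d y j 0 = 0.
Proof.
apply/le_anti; rewrite Ctilde_ge0 andbT.
apply: ge_inf; first by exists 0 => x [].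
by split => // i o; rewrite mul0r transferred_ge0.
Qed.

Lemma mul_Cstretch lam j : 0 <= lam -> lam * Cstretch r d y lam j = Ctilde r d y j lam.
Proof.
rewrite le_eqVlt => /predU1P[<-|lam_gt0]; first by rewrite mul0r Ctilde0.
by rewrite Cstretch_Ctilde // mulrA divff ?gt_eqF // mul1r.
Qed.

End stretched_schedule.

Theorem lemma2 (R : realType) (m T : nat) (J : finType)
    (w : J -> R) (r : J -> nat) (d : J -> 'I_m -> 'I_m -> nat)
    (y : J -> {set triple m T} -> R) :
  (0 < T)%N ->
  (forall j, 0 <= w j) ->
  lp_optimal w r d y ->
  (\int[lebesgue_measure]_(lam in `[0%R, 1%R] : set R)
      ((2 * lam) * \sum_(j : J) w j * Cstretch r d y lam j)%:E
   <= 2%:E * \sum_(j : J) (w j)%:E *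
        \int[lebesgue_measure]_(v in `[0%R, 1%R] : set R) (Ctilde r d y j v)%:E)%E.
Proof.
move=> _ w_ge0 [[y_ge0 _ _ _] _].
rewrite -ge0_integral_weighted_sum //.
- rewrite le_eqVlt; apply/orP; left; apply/eqP/eq_integral => lam.
  rewrite inE /= in_itv /= => /andP[lam_ge0 _].
  rewrite -mulrA mulr_sumr; congr (_ * _)%:E; apply: eq_bigr => j _.
  by rewrite mulrCA mul_Cstretch.
- by move=> j; exact: (measurable_Ctilde r d y j (measurable_itv _)).
- by move=> j v _; apply: Ctilde_ge0.
Qed.
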